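(* Let $F_\infty$ be the free group on a countably infinite set. Then neither $\mathrm{Aut}(F_\infty)$ nor $\mathrm{Out}(F_\infty)$ is residually finite, and neither satisfies the Tits alternative.
   Context: A group is residually finite if for every nontrivial element there is a homomorphism to a finite group not killing it. A group satisfies the Tits alternative if every subgroup either is virtually solvable or contains a nonabelian free subgroup. *)

From mathcomp Require Import all_boot all_fingroup.
From Stdlib Require List.

Set Implicit Arguments.
Unset Strict Implicit.
Unset Printing Implicit Defensive.

(* Abstract (possibly infinite) groups, presented set-theoretically:        *)
(* a carrier type [gT], the subset [gD] of elements that belong to the       *)
(* group, an equality [geq] on those elements (the group elements are the    *)
(* [geq]-classes of [gD]), and the group operations.                         *)
Record GroupData := {
  gT : Type;
  gD : gT -> Prop;
  geq : gT -> gT -> Prop;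
  gmul : gT -> gT -> gT;
  ginv : gT -> gT;
  gone : gT }.

Section GenericNotions.
Variable G : GroupData.
Local Notation T := (gT G).
Local Notation D := (@gD G).
Local Notation eqG := (@geq G).
Local Notation mul := (@gmul G).
Local Notation inv := (@ginv G).
Local Notation one := (@gone G).

Definition subgroup (S : T -> Prop) : Prop :=
  (forall x, S x -> D x) /\ S one /\
  (forall x y, S x -> S y -> S (mul x y)) /\
  (forall x, S x -> S (inv x)) /\
  (forall x y, S x -> D y -> eqG x y -> S y).

Definition hom_to_fin (H : finGroupType) (f : T -> H) : Prop :=
  (forall x y, D x -> D y -> eqG x y -> f x = f y) /\
  (forall x y, D x -> D y -> f (mul x y) = (f x * f y)%g).

Definition residually_finite : Prop :=
  forall g, D g -> ~ eqG g one ->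
    exists (H : finGroupType) (f : T -> H), hom_to_fin f /\ f g <> 1%g.

Inductive gen (A : T -> Prop) : T -> Prop :=
  | gen_base x : A x -> D x -> gen A x
  | gen_one : gen A one
  | gen_mul x y : gen A x -> gen A y -> gen A (mul x y)
  | gen_inv x : gen A x -> gen A (inv x)
  | gen_eq x y : gen A x -> D y -> eqG x y -> gen A y.

Definition comm (a b : T) : T := mul (mul (inv a) (inv b)) (mul a b).

Definition derived (S : T -> Prop) : T -> Prop :=
  gen (fun x => exists a b, S a /\ S b /\ x = comm a b).

Fixpoint derived_iter (n : nat) (S : T -> Prop) : T -> Prop :=
  match n with
  | 0 => S
  | n'.+1 => derived (derived_iter n' S)
  end.

Definition solvable_sub (S : T -> Prop) : Prop :=
  exists n, forall x, derived_iter n S x -> eqG x one.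

Definition finite_index (T0 S : T -> Prop) : Prop :=
  exists l : list T, (forall r, List.In r l -> S r) /\
    forall s, S s -> exists r t, List.In r l /\ T0 t /\ eqG s (mul r t).

Definition virtually_solvable (S : T -> Prop) : Prop :=
  exists T0, subgroup T0 /\ (forall x, T0 x -> S x) /\
    finite_index T0 S /\ solvable_sub T0.

(* words over an alphabet X; (x, false) stands for x, (x, true) for x^-1 *)
Inductive reduced_word {X : Type} : list (X * bool) -> Prop :=
  | rw_nil : reduced_word nil
  | rw_one a : reduced_word (a :: nil)
  | rw_cons a b w : ~ (a.1 = b.1 /\ a.2 <> b.2) ->
      reduced_word (b :: w) -> reduced_word (a :: b :: w).

Definition eval_word {X : Type} (f : X -> T) (w : list (X * bool)) : T :=
  foldr (fun a acc => mul (if a.2 then inv (f a.1) else f a.1) acc) one w.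

Definition contains_nonabelian_free (S : T -> Prop) : Prop :=
  exists (X : Type) (f : X -> T),
    (exists x y : X, x <> y) /\ (forall x, S (f x)) /\
    forall w, reduced_word w -> w <> nil -> ~ eqG (eval_word f w) one.

Definition tits_alternative : Prop :=
  forall S, subgroup S -> virtually_solvable S \/ contains_nonabelian_free S.

End GenericNotions.

(* The free group F_oo on the countably infinite set nat: words over nat,   *)
(* modulo free reduction.                                                    *)
Definition word := seq (nat * bool).

Definition push (a : nat * bool) (w : word) : word :=
  match w with
  | b :: w' => if (a.1 == b.1) && (a.2 != b.2) then w' else a :: w
  | [::] => [:: a]
  end.

Definition reduce (w : word) : word := foldr push [::] w.

Definition weq (u v : word) : Prop := reduce u = reduce v.

Definition winv (w : word) : word := rev (map (fun a => (a.1, ~~ a.2)) w).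

Definition is_Fhom (phi : word -> word) : Prop :=
  (forall u v, weq u v -> weq (phi u) (phi v)) /\
  (forall u v, weq (phi (u ++ v)) (phi u ++ phi v)).

(* Aut(F_oo): an automorphism is given by a pair (phi, psi) of mutually
   inverse endomorphisms; two pairs are equal iff phi agrees. *)
Definition aut_carrier := ((word -> word) * (word -> word))%type.

Definition is_aut (p : aut_carrier) : Prop :=
  is_Fhom p.1 /\ is_Fhom p.2 /\
  (forall w, weq (p.1 (p.2 w)) w) /\ (forall w, weq (p.2 (p.1 w)) w).

Definition aut_eq (p q : aut_carrier) : Prop := forall w, weq (p.1 w) (q.1 w).
Definition aut_mul (p q : aut_carrier) : aut_carrier :=
  (fun w => p.1 (q.1 w), fun w => q.2 (p.2 w)).
Definition aut_inv (p : aut_carrier) : aut_carrier := (p.2, p.1).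
Definition aut_one : aut_carrier := (fun w => w, fun w => w).

(* Out(F_oo) = Aut(F_oo)/Inn(F_oo): p ~ q iff p = (conj by c) o q *)
Definition out_eq (p q : aut_carrier) : Prop :=
  exists c : word, forall w, weq (p.1 w) (winv c ++ q.1 w ++ c).

Definition AutFinf : GroupData :=
  {| gT := aut_carrier; gD := is_aut; geq := aut_eq;
     gmul := aut_mul; ginv := aut_inv; gone := aut_one |}.

Definition OutFinf : GroupData :=
  {| gT := aut_carrier; gD := is_aut; geq := out_eq;
     gmul := aut_mul; ginv := aut_inv; gone := aut_one |}.

From Pilot Require Import Defs.
From Stdlib Require Import ZArith Lia Classical.
From mathcomp Require Import all_boot all_fingroup cyclic zify.

Set Implicit Arguments.
Unset Strict Implicit.
Unset Printing Implicit Defensive.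

(* Let gamma be the automorphism of F_oo permuting the basis x_0, x_1, ... by the
   3-cycles (x_3q x_3q+1 x_3q+2).  Basis permutations preserving a partition of
   the basis into finite blocks of a common size form a subgroup P of Aut(F_oo),
   and its image in Out(F_oo); every element of P has finite order, so P contains
   no free subgroup.  Grouping m consecutive triples into a single 3m-cycle gives
   an m-th root of gamma in P, for every m.  Hence the image of gamma in a finite
   group H is an |H|-th power, i.e. trivial, although gamma is not even inner
   (it changes the exponent sum of x_0).  Likewise a subgroup of index k in P
   contains the k!-th power of a root of any P-conjugate of gamma, hence all
   these conjugates.  On six points gamma is the commutator of two of its
   conjugates, so every term of the derived series of such a subgroup still
   contains gamma: P is not virtually solvable. *)

(** * Groups given by a carrier, a domain and an equivalence *)

Lemma pigeonhole (A : Type) (P : nat -> A -> Prop) (l : list A) (I : seq nat) :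
  uniq I -> size l < size I -> (forall i, i \in I -> exists2 r, List.In r l & P i r) ->
  exists i j r, [/\ i \in I, j \in I, i != j, P i r & P j r].
Proof.
elim: l I => [|a l IHl] I uI ltlI cover.
  by case: I uI ltlI cover => // i I _ _ /(_ i (mem_head _ _)) [].
have [[i0 Ii0 Pi0a]|noa] := classic (exists2 i0, i0 \in I & P i0 a); last first.
  apply: IHl => // [|i Ii]; first exact: ltnW.
  by have [r [ar|lr] Pir] := cover i Ii; [case: noa; exists i; rewrite // ar | exists r].
have [[j Ij Pja]|noa'] := classic (exists2 j, j \in rem i0 I & P j a).
  move: Ij; rewrite mem_rem_uniq // inE => /andP[ji0 Ij].
  by exists i0, j, a; split; rewrite // eq_sym.
have [|||i [j [r [Ii Ij ij Pir Pjr]]]] := IHl (rem i0 I); first exact: rem_uniq.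
- by rewrite size_rem // -ltnS (ltn_predK ltlI).
- move=> i; rewrite mem_rem_uniq // inE => /andP[ii0 Ii].
  have [r [ar|lr] Pir] := cover i Ii; last by exists r.
  by case: noa'; exists i; rewrite ?mem_rem_uniq ?inE ?ii0 // ar.
by exists i, j, r; split; rewrite // (mem_rem Ii, mem_rem Ij).
Qed.

Section GroupTheory.
Variable G : GroupData.
Local Notation D := (@gD G).
Local Notation eqG := (@Defs.geq G).
Local Notation mul := (@gmul G).
Local Notation inv := (@ginv G).
Local Notation one := (@gone G).

Record group_axioms : Prop := {
  geq_refl : forall x, D x -> eqG x x;
  geq_sym : forall x y, D x -> D y -> eqG x y -> eqG y x;
  geq_trans : forall x y z, D x -> D y -> D z -> eqG x y -> eqG y z -> eqG x z;
  gone_mem : D one;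
  gmul_mem : forall x y, D x -> D y -> D (mul x y);
  ginv_mem : forall x, D x -> D (inv x);
  gmul_congr : forall x x' y y', D x -> D x' -> D y -> D y' ->
    eqG x x' -> eqG y y' -> eqG (mul x y) (mul x' y');
  gmulA : forall x y z, D x -> D y -> D z -> eqG (mul x (mul y z)) (mul (mul x y) z);
  gmul1g : forall x, D x -> eqG (mul one x) x;
  gmulVg : forall x, D x -> eqG (mul (inv x) x) one }.

Fixpoint gpow (x : gT G) (n : nat) : gT G :=
  if n is n'.+1 then mul x (gpow x n') else one.

Lemma reduced_word_nseq (X : Type) (a : X * bool) n : reduced_word (nseq n a).
Proof.
elim: n => [|[|n] IH]; [exact: rw_nil | exact: rw_one |].
by apply: rw_cons => // -[_]; apply.
Qed.

Lemma eval_word_nseq (X : Type) (f : X -> gT G) x n :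
  eval_word f (nseq n (x, false)) = gpow (f x) n.
Proof. by elim: n => //= n ->. Qed.

Lemma torsion_no_free S :
  (forall x, S x -> exists2 n, 0 < n & eqG (gpow x n) one) ->
  ~ contains_nonabelian_free S.
Proof.
move=> torS [X [f [[x _] [Sf free_f]]]].
have [n n_gt0 fxn1] := torS _ (Sf x).
apply: (free_f (nseq n (x, false))); first exact: reduced_word_nseq.
  by case: n n_gt0 {fxn1}.
by rewrite eval_word_nseq.
Qed.

Hypothesis HG : group_axioms.

Lemma gpow_mem x n : D x -> D (gpow x n).
Proof.
by move=> Dx; elim: n => /= [|n Dxn]; [exact: (gone_mem HG) | exact: (gmul_mem HG)].
Qed.

Ltac gmem := repeat first
  [ assumption | apply: (gmul_mem HG) | apply: (ginv_mem HG) | apply: (gone_mem HG)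
  | apply: gpow_mem ].

Ltac gapply lem := apply: lem; gmem.
Ltac gtrans mid := apply: (geq_trans HG (y := mid)); gmem.

Lemma perfect_subset_derived_iter S (C : gT G -> Prop) :
  (forall x, C x -> S x) -> (forall x, C x -> D x) ->
  (forall x, C x -> exists a b, [/\ C a, C b & eqG (comm a b) x]) ->
  forall n x, C x -> derived_iter n S x.
Proof.
move=> CS CD Ccomm; elim=> [|n IHn] x Cx /=; first exact: CS.
have [a [b [Ca Cb abx]]] := Ccomm x Cx.
apply: (gen_eq (x := comm a b)) => //; last exact: CD.
apply: gen_base; first by exists a, b; split; [exact: IHn | split; [exact: IHn |]].
by rewrite /comm; gmem; exact: CD.
Qed.

Lemma perfect_subset_not_solvable S (C : gT G -> Prop) x :
  (forall x, C x -> S x) -> (forall x, C x -> D x) ->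
  (forall x, C x -> exists a b, [/\ C a, C b & eqG (comm a b) x]) ->
  C x -> ~ eqG x one -> ~ solvable_sub S.
Proof.
move=> CS CD Ccomm Cx x_ne1 [n solS]; apply: x_ne1 (solS _ _).
exact: perfect_subset_derived_iter Cx.
Qed.

Lemma gmulKg x y : D x -> D y -> eqG (mul (inv x) (mul x y)) y.
Proof.
move=> Dx Dy; gtrans (mul (mul (inv x) x) y); first gapply (gmulA HG).
gtrans (mul one y); last gapply (gmul1g HG).
by gapply (gmul_congr HG); [gapply (gmulVg HG) | gapply (geq_refl HG)].
Qed.

Lemma gmul_cancel x y z : D x -> D y -> D z -> eqG (mul x y) (mul x z) -> eqG y z.
Proof.
move=> Dx Dy Dz xyz; gtrans (mul (inv x) (mul x y)).
  by gapply (geq_sym HG); gapply gmulKg.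
gtrans (mul (inv x) (mul x z)); last gapply gmulKg.
by gapply (gmul_congr HG); gapply (geq_refl HG).
Qed.

Lemma gpow_congr x y n : D x -> D y -> eqG x y -> eqG (gpow x n) (gpow y n).
Proof.
move=> Dx Dy xy; elim: n => /= [|n IHn]; first gapply (geq_refl HG).
by gapply (gmul_congr HG).
Qed.

Lemma gpowD x m n : D x -> eqG (gpow x (m + n)) (mul (gpow x m) (gpow x n)).
Proof.
move=> Dx; elim: m => /= [|m IHm].
  by gapply (geq_sym HG); gapply (gmul1g HG).
gtrans (mul x (mul (gpow x m) (gpow x n))); last gapply (gmulA HG).
by gapply (gmul_congr HG); gapply (geq_refl HG).
Qed.

Lemma gpowM x m n : D x -> eqG (gpow x (m * n)) (gpow (gpow x m) n).
Proof.
move=> Dx; elim: n => [|n IHn]; first by rewrite muln0; gapply (geq_refl HG).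
rewrite mulnS /=; gtrans (mul (gpow x m) (gpow x (m * n))); first gapply gpowD.
by gapply (gmul_congr HG); gapply (geq_refl HG).
Qed.

Lemma gpow_same_coset y r s t i d : D y -> D r -> D s -> D t ->
  eqG (gpow y i) (mul r s) -> eqG (gpow y (i + d)) (mul r t) ->
  eqG (gpow y d) (mul (inv s) t).
Proof.
move=> Dy Dr Ds Dt yi yid.
have syd_t : eqG (mul s (gpow y d)) t.
  apply: (gmul_cancel (x := r)); gmem.
  gtrans (mul (mul r s) (gpow y d)); first gapply (gmulA HG).
  gtrans (mul (gpow y i) (gpow y d)).
    by gapply (gmul_congr HG); [gapply (geq_sym HG) | gapply (geq_refl HG)].
  by gtrans (gpow y (i + d)); gapply (geq_sym HG); gapply gpowD.
gtrans (mul (inv s) (mul s (gpow y d))); first by gapply (geq_sym HG); gapply gmulKg.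
by gapply (gmul_congr HG); gapply (geq_refl HG).
Qed.

Lemma subgroup_gpow S y n : subgroup S -> S y -> S (gpow y n).
Proof. by case=> _ [S1 [Smul _]] Sy; elim: n => //= n; apply: Smul. Qed.

Lemma same_coset_gpow_mem T0 y r i j : subgroup T0 -> D y -> D r -> i <= j ->
  (exists2 u, T0 u & eqG (gpow y i) (mul r u)) ->
  (exists2 v, T0 v & eqG (gpow y j) (mul r v)) -> T0 (gpow y (j - i)).
Proof.
move=> [T0D [_ [T0mul [T0inv T0sat]]]] Dy Dr ij [u T0u yiu] [v T0v yjv].
have [Du Dv] := (T0D _ T0u, T0D _ T0v).
apply: (T0sat (mul (inv u) v)); first by apply: T0mul => //; apply: T0inv.
  exact: gpow_mem.
have := gpow_same_coset (d := j - i) Dy Dr Du Dv yiu.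
by rewrite subnKC // => /(_ yjv) ?; gapply (geq_sym HG).
Qed.

Lemma finite_index_small_power S T0 l y : subgroup S -> subgroup T0 ->
  (forall r, List.In r l -> S r) ->
  (forall s, S s -> exists r u, List.In r l /\ T0 u /\ eqG s (mul r u)) ->
  S y -> exists2 d, 0 < d <= size l & T0 (gpow y d).
Proof.
move=> sgS sgT0 lS cover Sy; have SD := proj1 sgS.
pose P i r := S r /\ exists2 u, T0 u & eqG (gpow y i) (mul r u).
have [|||i [j [r [Ii Ij ij [Sr yir] [_ yjr]]]]] := @pigeonhole _ P l (iota 0 (size l).+1).
- exact: iota_uniq.
- by rewrite size_iota.
- move=> i _; have [r [u [lr [T0u yiu]]]] := cover _ (subgroup_gpow i sgS Sy).
  by exists r; last (split; [exact: lS | exists u]).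
move: Ii Ij; rewrite !mem_iota !add0n !ltnS => il jl.
case: (ltngtP i j) ij => // [ltij|ltji] _.
- exists (j - i); first by rewrite subn_gt0 ltij (leq_trans (leq_subr _ _)).
  exact: same_coset_gpow_mem (SD _ Sy) (SD _ Sr) (ltnW ltij) yir yjr.
- exists (i - j); first by rewrite subn_gt0 ltji (leq_trans (leq_subr _ _)).
  exact: same_coset_gpow_mem (SD _ Sy) (SD _ Sr) (ltnW ltji) yjr yir.
Qed.

(* A subgroup of index at most [k] contains [y ^ k`!] for every [y]. *)
Lemma finite_index_gpow S T0 : subgroup S -> subgroup T0 -> finite_index T0 S ->
  exists2 e, 0 < e & forall y, S y -> T0 (gpow y e).
Proof.
move=> sgS sgT0 [l [lS cover]]; exists (size l)`!; first exact: fact_gt0.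
move=> y Sy; have [d /andP[d_gt0 d_le] T0yd] := finite_index_small_power sgS sgT0 lS cover Sy.
have d_dvd : d %| (size l)`! by rewrite dvdn_fact // d_gt0.
have [_ [_ [_ [_ T0sat]]]] := sgT0; have Dy := proj1 sgS _ Sy.
apply: (T0sat (gpow (gpow y d) ((size l)`! %/ d))); first exact: subgroup_gpow.
  exact: gpow_mem.
by rewrite -{2}(divnK d_dvd) mulnC; gapply (geq_sym HG); gapply gpowM.
Qed.

Lemma hom_to_fin_gpow (H : finGroupType) (f : gT G -> H) x n :
  hom_to_fin f -> D x -> f (gpow x n) = (f x ^+ n)%g.
Proof.
move=> [f_eq f_mul] Dx; elim: n => /= [|n IHn]; last by rewrite f_mul ?expgS ?IHn; gmem.
have Done := gone_mem HG.
have f11 : f one = (f one * f one)%g.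
  by rewrite -f_mul // (f_eq one (mul one one)) //; gmem; gapply (geq_sym HG); gapply (gmul1g HG).
by move/(congr1 (fun z => (f one)^-1 * z)%g): f11; rewrite mulVg mulKg.
Qed.

Lemma divisible_not_residually_finite g : D g -> ~ eqG g one ->
  (forall n, 0 < n -> exists2 x, D x & eqG (gpow x n) g) -> ~ residually_finite G.
Proof.
move=> Dg g_ne1 g_div /(_ g Dg g_ne1) [H [f [f_hom fg_ne1]]]; apply: fg_ne1.
have [x Dx xg] := g_div #|H| (ltac:(by apply/card_gt0P; exists 1%g)).
rewrite -(proj1 f_hom _ _ (gpow_mem _ Dx) Dg xg) hom_to_fin_gpow //.
by rewrite -cardsT expg_cardG ?inE.
Qed.

End GroupTheory.

(** * Free reduction in F_oo *)

Definition letter_inv (a : nat * bool) : nat * bool := (a.1, ~~ a.2).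

Lemma letter_invK : involutive letter_inv.
Proof. by case=> x []. Qed.

Fixpoint reducedb (w : word) : bool :=
  if w is a :: ((b :: _) as w') then ~~ ((a.1 == b.1) && (a.2 != b.2)) && reducedb w'
  else true.

Lemma reducedb_cons a w : reducedb (a :: w) -> reducedb w.
Proof. by case: w => [|b w] //= /andP[]. Qed.

Lemma reducedb_push a w : reducedb w -> reducedb (push a w).
Proof.
case: w => [|b w] //= rw; case: ifP => [_|ab]; first exact: reducedb_cons rw.
by rewrite /= ab.
Qed.

Lemma reducedb_foldr u w : reducedb w -> reducedb (foldr push w u).
Proof. by move=> rw; elim: u => //= a u; apply: reducedb_push. Qed.

Lemma reducedb_reduce u : reducedb (reduce u).
Proof. exact: reducedb_foldr. Qed.

Lemma push_pushV a w : reducedb w -> push a (push (letter_inv a) w) = w.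
Proof.
case: a => x e; case: w => [|[y f] w] /=; first by rewrite eqxx; case: e.
case: (boolP ((x == y) && (~~ e != f))) => [/andP[/eqP <- ef]|xyef] rw.
  have fe : f = e by move: ef {rw}; case: e; case: f.
  subst f.
  by case: w rw => [|[z g] w] //= /andP[/negbTE ->].
by rewrite /= eqxx; case: (e).
Qed.

Lemma foldr_push_push a u w : reducedb w ->
  foldr push w (push a u) = push a (foldr push w u).
Proof.
move=> rw; case: u => [|b u] //=; case: ifP => // /andP[/eqP ab ba].
have -> : b = letter_inv a by case: a b ab ba => x e [y f] /= ->; case: e; case: f.
by rewrite push_pushV //; apply: reducedb_foldr.
Qed.

Lemma foldr_push_reduce u w : reducedb w -> foldr push w u = foldr push w (reduce u).
Proof. by move=> rw; elim: u => //= a u ->; rewrite /reduce foldr_push_push. Qed.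

Lemma reduce_cat u v : reduce (u ++ v) = foldr push (reduce v) (reduce u).
Proof. by rewrite /reduce foldr_cat -foldr_push_reduce //; apply: reducedb_reduce. Qed.

Lemma weq_refl u : weq u u. Proof. by []. Qed.
Lemma weq_sym u v : weq u v -> weq v u. Proof. by rewrite /weq => ->. Qed.
Lemma weq_trans u v w : weq u v -> weq v w -> weq u w. Proof. by rewrite /weq => ->. Qed.

Lemma weq_cat u u' v v' : weq u u' -> weq v v' -> weq (u ++ v) (u' ++ v').
Proof. by rewrite /weq !reduce_cat => -> ->. Qed.

Lemma winv_cons a w : winv (a :: w) = winv w ++ [:: letter_inv a].
Proof. by rewrite /winv /= rev_cons cats1. Qed.

Lemma winv_cat u v : winv (u ++ v) = winv v ++ winv u.
Proof. by rewrite /winv map_cat rev_cat. Qed.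

Lemma winvK : involutive winv.
Proof.
move=> w; rewrite /winv map_rev revK -map_comp -[RHS]map_id.
by apply: eq_map => -[x e] /=; rewrite negbK.
Qed.

Lemma weq_cancel_letter a w : weq [:: letter_inv a, a & w] w.
Proof.
rewrite /weq /reduce /=.
by have := push_pushV (letter_inv a) (reducedb_reduce w); rewrite letter_invK.
Qed.

Lemma weq_winvl w : weq (winv w ++ w) [::].
Proof.
elim: w => // a w IHw; rewrite winv_cons -catA /=.
exact: weq_trans (weq_cat (weq_refl _) (weq_cancel_letter a w)) IHw.
Qed.

Lemma weq_winvr w : weq (w ++ winv w) [::].
Proof. by have := weq_winvl (winv w); rewrite winvK. Qed.

Lemma weq_idem w : weq w (w ++ w) -> weq w [::].
Proof.
move=> ww; apply: weq_sym; apply: weq_trans (weq_sym (weq_winvl w)) _.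
have := weq_cat (weq_refl (winv w)) ww; rewrite catA => /weq_trans; apply.
exact: weq_cat (weq_winvl w) (weq_refl w).
Qed.

Lemma weq_winv_unique u v : weq (u ++ v) [::] -> weq u (winv v).
Proof.
move=> uv; have := weq_cat uv (weq_refl (winv v)); rewrite -catA /=.
by apply: weq_trans; have := weq_cat (weq_refl u) (weq_winvr v); rewrite cats0.
Qed.

Definition letter_sum (k : nat) (a : nat * bool) : Z :=
  if a.1 == k then (if a.2 then (-1)%Z else 1%Z) else 0%Z.

Definition expsum (k : nat) (w : word) : Z := foldr (fun a s => (letter_sum k a + s)%Z) 0%Z w.

Lemma expsum_cat k u v : expsum k (u ++ v) = (expsum k u + expsum k v)%Z.
Proof. by elim: u => //= a u ->; lia. Qed.

Lemma letter_sum_inv k a : letter_sum k (letter_inv a) = (- letter_sum k a)%Z.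
Proof. by rewrite /letter_sum /=; case: (a.1 == k); case: a.2. Qed.

Lemma expsum_push k a w : expsum k (push a w) = (letter_sum k a + expsum k w)%Z.
Proof.
case: w => [|b w] //=; case: ifP => //= /andP[/eqP ab ba].
have -> : b = letter_inv a by case: a b ab ba => x e [y f] /= ->; case: e; case: f.
by rewrite letter_sum_inv; lia.
Qed.

Lemma expsum_reduce k w : expsum k (reduce w) = expsum k w.
Proof. by elim: w => //= a w <-; apply: expsum_push. Qed.

Lemma weq_expsum k u v : weq u v -> expsum k u = expsum k v.
Proof. by move=> uv; rewrite -expsum_reduce uv expsum_reduce. Qed.

Lemma expsum_winv k w : expsum k (winv w) = (- expsum k w)%Z.
Proof.
elim: w => // a w IHw; rewrite winv_cons expsum_cat IHw /= letter_sum_inv; lia.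
Qed.

Lemma Fhom_weq phi u v : is_Fhom phi -> weq u v -> weq (phi u) (phi v).
Proof. by case=> + _; apply. Qed.

Lemma Fhom_cat phi u v : is_Fhom phi -> weq (phi (u ++ v)) (phi u ++ phi v).
Proof. by case=> _; apply. Qed.

Lemma Fhom_nil phi : is_Fhom phi -> weq (phi [::]) [::].
Proof. by move=> hom_phi; apply: weq_idem; apply: (Fhom_cat [::] [::] hom_phi). Qed.

Lemma Fhom_winv phi w : is_Fhom phi -> weq (phi (winv w)) (winv (phi w)).
Proof.
move=> hom_phi; apply: weq_winv_unique.
apply: weq_trans (weq_sym (Fhom_cat _ _ hom_phi)) _.
exact: weq_trans (Fhom_weq hom_phi (weq_winvl w)) (Fhom_nil hom_phi).
Qed.

Lemma Fhom_comp phi psi : is_Fhom phi -> is_Fhom psi -> is_Fhom (fun w => phi (psi w)).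
Proof.
move=> hom_phi hom_psi; split=> u v; first by move=> /(Fhom_weq hom_psi) /(Fhom_weq hom_phi).
exact: weq_trans (Fhom_weq hom_phi (Fhom_cat u v hom_psi)) (Fhom_cat _ _ hom_phi).
Qed.

Definition wconj (c u : word) : word := winv c ++ u ++ c.

Lemma weq_wconj c u v : weq u v -> weq (wconj c u) (wconj c v).
Proof. by move=> uv; apply: weq_cat (weq_refl _) (weq_cat uv (weq_refl _)). Qed.

Lemma wconjM c d u : wconj c (wconj d u) = wconj (d ++ c) u.
Proof. by rewrite /wconj winv_cat !catA. Qed.

Lemma wconj_nil u : weq (wconj [::] u) u.
Proof. by rewrite /wconj cats0. Qed.

Lemma wconjK c u : weq (wconj (winv c) (wconj c u)) u.
Proof.
rewrite wconjM /wconj winv_cat winvK.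
by have := weq_cat (weq_winvr c) (weq_cat (weq_refl u) (weq_winvr c)); rewrite cats0 -!catA.
Qed.

Lemma Fhom_wconj phi c u : is_Fhom phi -> weq (phi (wconj c u)) (wconj (phi c) (phi u)).
Proof.
move=> hom_phi; apply: weq_trans (Fhom_cat _ _ hom_phi) _.
by apply: weq_cat; [apply: Fhom_winv | apply: Fhom_cat].
Qed.

(** * Aut(F_oo) and its quotient Out(F_oo) *)

Lemma is_aut_mul p q : is_aut p -> is_aut q -> is_aut (aut_mul p q).
Proof.
case=> [hom_p1 [hom_p2 [p12 p21]]] [hom_q1 [hom_q2 [q12 q21]]].
split; first exact: Fhom_comp.
split; first exact: Fhom_comp.
split=> w /=.
  exact: weq_trans (Fhom_weq hom_p1 (q12 _)) (p12 w).
exact: weq_trans (Fhom_weq hom_q2 (p21 _)) (q21 w).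
Qed.

Lemma is_aut_inv p : is_aut p -> is_aut (aut_inv p).
Proof. by case=> ? [? [? ?]]; split; [| split; [| split]]. Qed.

Lemma is_aut_one : is_aut aut_one.
Proof. by have hom_id : is_Fhom id by split. Qed.

(* [AutFinf] and [OutFinf] are [aut_group aut_eq] and [aut_group out_eq]; the
   argument works uniformly for every such congruence. *)
Record aut_congruence (E : aut_carrier -> aut_carrier -> Prop) : Prop := {
  congr_sym : forall p q, is_aut p -> is_aut q -> E p q -> E q p;
  congr_trans : forall p q r, is_aut p -> is_aut q -> is_aut r -> E p q -> E q r -> E p r;
  congr_mul : forall p p' q q', is_aut p -> is_aut p' -> is_aut q -> is_aut q' ->
    E p p' -> E q q' -> E (aut_mul p q) (aut_mul p' q');
  congr_inv : forall p p', is_aut p -> is_aut p' -> E p p' -> E (aut_inv p) (aut_inv p');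
  congr_aut_eq : forall p q, is_aut p -> is_aut q -> aut_eq p q -> E p q }.

Definition aut_group (E : aut_carrier -> aut_carrier -> Prop) : GroupData :=
  {| gT := aut_carrier; gD := is_aut; Defs.geq := E;
     gmul := aut_mul; ginv := aut_inv; gone := aut_one |}.

Lemma aut_congruence_group E : aut_congruence E -> group_axioms (aut_group E).
Proof.
move=> cE; have E_aut_eq := congr_aut_eq cE.
split=> //=; try exact: is_aut_one; try exact: is_aut_mul; try exact: is_aut_inv.
- by move=> p Dp; apply: E_aut_eq.
- exact: congr_sym.
- exact: congr_trans.
- exact: congr_mul.
- by move=> p q r Dp Dq Dr; apply: E_aut_eq; do ?[apply: is_aut_mul].
- by move=> p Dp; apply: E_aut_eq; do ?[apply: is_aut_mul | apply: is_aut_one].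
- move=> p Dp; apply: E_aut_eq;
    do ?[apply: is_aut_mul | apply: is_aut_inv | apply: is_aut_one | exact: Dp].
  by case: Dp => _ [_ [_ p21]] w; apply: p21.
Qed.

Lemma aut_congruence_aut_eq : aut_congruence aut_eq.
Proof.
split=> //.
- by move=> p q _ _ pq w; apply: weq_sym.
- by move=> p q r _ _ _ pq qr w; apply: weq_trans (pq w) (qr w).
- move=> p p' q q' _ [hom_p' _] _ _ pp' qq' w /=.
  exact: weq_trans (pp' _) (Fhom_weq hom_p' (qq' w)).
- move=> p p' [_ [hom_p2 [_ p21]]] [_ [_ [p12' _]]] pp' w /=.
  apply: weq_sym; apply: weq_trans (weq_sym (p21 (p'.2 w))) _.
  by apply: Fhom_weq hom_p2 _; apply: weq_trans (pp' _) (p12' w).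
Qed.

Lemma out_eqE p q : out_eq p q <-> exists c, forall w, weq (p.1 w) (wconj c (q.1 w)).
Proof. by []. Qed.

Lemma aut_congruence_out_eq : aut_congruence out_eq.
Proof.
split.
- move=> p q _ _ /out_eqE[c pq]; apply/out_eqE; exists (winv c) => w.
  exact: weq_sym (weq_trans (weq_wconj (winv c) (pq w)) (wconjK c _)).
- move=> p q r _ _ _ /out_eqE[c pq] /out_eqE[d qr]; apply/out_eqE; exists (d ++ c) => w.
  by rewrite -wconjM; apply: weq_trans (pq w) (weq_wconj c (qr w)).
- move=> p p' q q' _ [hom_p' _] _ _ /out_eqE[c pp'] /out_eqE[d qq'].
  apply/out_eqE; exists (p'.1 d ++ c) => w /=.
  rewrite -wconjM; apply: weq_trans (pp' _) (weq_wconj c _).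
  exact: weq_trans (Fhom_weq hom_p' (qq' w)) (Fhom_wconj _ _ hom_p').
- move=> p p' [_ [_ [p12 _]]] [_ [hom_p2' [_ p21']]] /out_eqE[c pp'].
  apply/out_eqE; exists (p'.2 (winv c)) => w /=.
  have p'p2 : weq (p'.1 (p.2 w)) (wconj (winv c) w).
    apply: weq_trans (weq_sym (wconjK c _)) (weq_wconj _ _).
    exact: weq_trans (weq_sym (pp' _)) (p12 w).
  apply: weq_trans (weq_sym (p21' (p.2 w))) _.
  exact: weq_trans (Fhom_weq hom_p2' p'p2) (Fhom_wconj _ _ hom_p2').
- move=> p q _ _ pq; apply/out_eqE; exists [::] => w.
  exact: weq_trans (pq w) (weq_sym (wconj_nil _)).
Qed.

(** * Automorphisms induced by block permutations of the basis *)

Definition rename (s : nat -> nat) (w : word) : word := map (fun a => (s a.1, a.2)) w.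

Definition perm_aut (s s' : nat -> nat) : aut_carrier := (rename s, rename s').

Lemma rename_comp s t w : rename s (rename t w) = rename (fun n => s (t n)) w.
Proof. by rewrite /rename -map_comp. Qed.

Lemma eq_rename s t : s =1 t -> rename s =1 rename t.
Proof. by move=> st w; apply: eq_map => a; rewrite st. Qed.

Lemma rename_id w : rename id w = w.
Proof. by rewrite /rename -[RHS]map_id; apply: eq_map => -[]. Qed.

Lemma rename_push s a w : injective s -> rename s (push a w) = push (s a.1, a.2) (rename s w).
Proof. by move=> inj_s; case: w => [|b w] //=; rewrite (inj_eq inj_s); case: ifP. Qed.

Lemma rename_reduce s w : injective s -> rename s (reduce w) = reduce (rename s w).
Proof. by move=> inj_s; elim: w => //= a w IHw; rewrite rename_push // IHw. Qed.

Lemma rename_Fhom s : injective s -> is_Fhom (rename s).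
Proof.
move=> inj_s; split=> u v; last by rewrite /rename map_cat.
by rewrite /weq -!rename_reduce // => ->.
Qed.

Lemma is_aut_perm_aut s s' : cancel s s' -> cancel s' s -> is_aut (perm_aut s s').
Proof.
move=> ss' s's; have [inj_s inj_s'] := (can_inj ss', can_inj s's).
split; first exact: rename_Fhom.
split; first exact: rename_Fhom.
by split=> w /=; rewrite rename_comp (eq_rename (_ : _ =1 id)) ?rename_id.
Qed.

Lemma perm_aut_mul s s' t t' :
  aut_eq (aut_mul (perm_aut s s') (perm_aut t t'))
         (perm_aut (fun n => s (t n)) (fun n => t' (s' n))).
Proof. by move=> w /=; rewrite rename_comp. Qed.

Lemma eq_perm_aut s s' t t' : s =1 t -> aut_eq (perm_aut s s') (perm_aut t t').
Proof. by move=> st w /=; rewrite (eq_rename st). Qed.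

Lemma perm_aut_gpow E s s' n :
  aut_eq (@gpow (aut_group E) (perm_aut s s') n) (perm_aut (iter n s) (iter n s')).
Proof.
move=> w; congr reduce; elim: n w => [|n IHn] w /=; first by rewrite rename_id.
by rewrite IHn rename_comp; apply: eq_rename => k; rewrite iterS.
Qed.

(* A permutation moving a generator changes its exponent sum, which inner
   automorphisms preserve. *)
Lemma perm_aut_not_inner s s' n : s n <> n -> ~ out_eq (perm_aut s s') aut_one.
Proof.
move=> sn /out_eqE[c sc]; have := weq_expsum n (sc [:: (n, false)]).
rewrite /wconj !expsum_cat expsum_winv /= /letter_sum /= eqxx.
by move/eqP: sn => /negbTE ->; lia.
Qed.

Definition blockwise (B : nat) (t : nat -> nat) (n : nat) : nat := B * (n %/ B) + t (n %% B).

Lemma divn_modn_block B q j : j < B -> (B * q + j) %/ B = q /\ (B * q + j) %% B = j.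
Proof.
move=> jB; have B_gt0 : 0 < B by case: B jB.
by rewrite mulnC divnMDl // divn_small // addn0 modnMDl modn_small.
Qed.

Lemma blockwiseE B t q j : j < B -> blockwise B t (B * q + j) = B * q + t j.
Proof. by move=> jB; rewrite /blockwise; case: (divn_modn_block q jB) => -> ->. Qed.

Lemma block_decomp B n : n = B * (n %/ B) + n %% B.
Proof. by rewrite mulnC -divn_eq. Qed.

Lemma blockwise_comp B t t' n : 0 < B -> {homo t' : j / j < B} ->
  blockwise B t (blockwise B t' n) = blockwise B (fun j => t (t' j)) n.
Proof. by move=> B_gt0 tB; rewrite [blockwise B t' n]/blockwise blockwiseE // tB // ltn_pmod. Qed.

Lemma eq_blockwise B t t' n : 0 < B -> {in gtn B, t =1 t'} ->
  blockwise B t n = blockwise B t' n.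
Proof. by move=> B_gt0 tt'; rewrite /blockwise tt' // inE ltn_pmod. Qed.

Lemma blockwise_id B n : blockwise B id n = n.
Proof. by rewrite /blockwise -block_decomp. Qed.

Lemma blockwise_cancel B t t' : 0 < B -> {homo t : j / j < B} ->
  {in gtn B, cancel t t'} -> cancel (blockwise B t) (blockwise B t').
Proof.
move=> B_gt0 tB tt' n; rewrite blockwise_comp // -[RHS](blockwise_id B).
exact: eq_blockwise.
Qed.

Lemma blockwise_iter B t k n : 0 < B -> {homo t : j / j < B} ->
  iter k (blockwise B t) n = blockwise B (iter k t) n.
Proof.
move=> B_gt0 tB; elim: k => [|k IHk] /=; first by rewrite blockwise_id.
by rewrite IHk blockwise_comp //; elim: k {IHk} => //= k IHk j /IHk /tB.
Qed.

Lemma blockwise_refine b K t n : 0 < b -> 0 < K ->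
  blockwise b t n = blockwise (b * K) (blockwise b t) n.
Proof.
move=> b_gt0 K_gt0; rewrite {2}/blockwise.
set q := n %/ (b * K); set j := n %% (b * K).
have -> : n = b * (K * q + j %/ b) + j %% b.
  by rewrite mulnDr mulnA -addnA -block_decomp /q /j -block_decomp.
by rewrite blockwiseE ?ltn_pmod // /blockwise mulnDr mulnA addnA.
Qed.

Definition block_stable (B : nat) (s : nat -> nat) : Prop := forall n, s n %/ B = n %/ B.

Lemma block_stableM B K s : block_stable B s -> block_stable (B * K) s.
Proof. by move=> sB n; rewrite !divnMA sB. Qed.

Lemma block_stable_comp B s t : block_stable B s -> block_stable B t ->
  block_stable B (fun n => s (t n)).
Proof. by move=> sB tB n; rewrite sB tB. Qed.

Lemma block_stable_cancel B s s' : cancel s' s -> block_stable B s -> block_stable B s'.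
Proof. by move=> s's sB n; rewrite -{2}(s's n) sB. Qed.

Lemma block_stable_blockwise B t : 0 < B -> {homo t : j / j < B} ->
  block_stable B (blockwise B t).
Proof.
move=> B_gt0 tB n; rewrite /blockwise.
by case: (divn_modn_block (n %/ B) (tB _ (ltn_pmod n B_gt0))).
Qed.

Definition block_perm (s s' : nat -> nat) : Prop :=
  [/\ cancel s s', cancel s' s & exists2 B, 0 < B & block_stable B s].

Lemma block_perm_id : block_perm id id.
Proof. by split=> //; exists 1. Qed.

Lemma block_perm_inv s s' : block_perm s s' -> block_perm s' s.
Proof.
by case=> ss' s's [B B_gt0 sB]; split=> //; exists B => //; apply: block_stable_cancel sB.
Qed.

Lemma block_perm_comp s s' t t' : block_perm s s' -> block_perm t t' ->
  block_perm (fun n => s (t n)) (fun n => t' (s' n)).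
Proof.
case=> ss' s's [B B_gt0 sB] [tt' t't [C C_gt0 tC]].
split; [exact: can_comp | exact: can_comp |].
exists (B * C); first by rewrite muln_gt0 B_gt0.
by apply: block_stable_comp; [apply: block_stableM | rewrite mulnC; apply: block_stableM].
Qed.

Lemma block_perm_aut s s' : block_perm s s' -> is_aut (perm_aut s s').
Proof. by case=> ss' s's _; apply: is_aut_perm_aut. Qed.

Lemma block_perm_blockwise B t t' : 0 < B -> {homo t : j / j < B} -> {homo t' : j / j < B} ->
  {in gtn B, cancel t t'} -> {in gtn B, cancel t' t} ->
  block_perm (blockwise B t) (blockwise B t').
Proof.
move=> B_gt0 tB t'B tt' t't; split; try exact: blockwise_cancel.
by exists B => //; apply: block_stable_blockwise.
Qed.

(* On each block, [s] induces a permutation of ['I_B], whose order divides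
   [#|{perm 'I_B}|]. *)
Lemma block_perm_finite_order s s' : block_perm s s' ->
  exists2 N, 0 < N & forall n, iter N s n = n.
Proof.
case=> ss' _ [B B_gt0 sB]; exists #|{perm 'I_B}|; first by apply/card_gt0P; exists 1%g.
move=> n; set q := n %/ B.
pose f (i : 'I_B) : 'I_B := Ordinal (ltn_pmod (s (B * q + i)) B_gt0).
have sf (i : 'I_B) : s (B * q + i) = B * q + f i.
  by rewrite /= {1}(block_decomp B (s _)) sB; case: (divn_modn_block q (ltn_ord i)) => ->.
have inj_f : injective f.
  move=> i1 i2 fi12; apply/val_inj/eqP; rewrite -(eqn_add2l (B * q)).
  by apply/eqP/(can_inj ss'); rewrite !sf fi12.
have iter_sf k (i : 'I_B) : iter k s (B * q + i) = B * q + iter k f i.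
  by elim: k => // k; rewrite !iterS => ->; apply: sf.
have fN1 : (perm inj_f ^+ #|{perm 'I_B}|)%g = 1%g by rewrite -cardsT expg_cardG ?inE.
rewrite (block_decomp B n) -/q -[n %% B]/(val (Ordinal (ltn_pmod n B_gt0))) iter_sf.
by rewrite -(eq_iter (permE inj_f)) -permX fN1 perm1.
Qed.

(** * The element gamma, its roots and the commutator identity *)

Definition rot3 (r : nat) : nat := (r + 1) %% 3.
Definition rot3_inv (r : nat) : nat := (r + 2) %% 3.

Definition gamma : nat -> nat := blockwise 3 rot3.
Definition gamma_inv : nat -> nat := blockwise 3 rot3_inv.

Lemma block_perm_gamma : block_perm gamma gamma_inv.
Proof.
by apply: block_perm_blockwise => // [j _|j _|j|j]; rewrite ?ltn_pmod //; case: j => [|[|[|j]]].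
Qed.

Lemma gamma_moves_0 : gamma 0 <> 0.
Proof. by []. Qed.

Section GammaRoots.
Variable m : nat.
Hypothesis m_gt0 : 0 < m.

(* A block of [3m] points is laid out as a [3m]-cycle: the point of the cycle
   at position [r m + b] ([r < 3], [b < m]) is [3 b + r].  Going [m] steps
   along the cycle then rotates each triple [(3b, 3b+1, 3b+2)]. *)
Definition cycle_to_block (p : nat) : nat := 3 * (p %% m) + p %/ m.
Definition block_to_cycle (j : nat) : nat := (j %% 3) * m + j %/ 3.

Lemma cycle_to_blockE r b : b < m -> cycle_to_block (r * m + b) = 3 * b + r.
Proof.
by move=> bm; rewrite /cycle_to_block [r * m]mulnC; case: (divn_modn_block r bm) => -> ->.
Qed.

Lemma block_to_cycleE b r : r < 3 -> block_to_cycle (3 * b + r) = r * m + b.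
Proof. by move=> r3; rewrite /block_to_cycle; case: (divn_modn_block b r3) => -> ->. Qed.

Lemma cycle_decomp p : p < 3 * m -> exists r b, [/\ r < 3, b < m & p = r * m + b].
Proof.
move=> p3m; exists (p %/ m), (p %% m).
by rewrite ltn_pmod // ltn_divLR // -divn_eq.
Qed.

Lemma block_decomp3 j : j < 3 * m -> exists b r, [/\ b < m, r < 3 & j = 3 * b + r].
Proof.
move=> j3m; exists (j %/ 3), (j %% 3); rewrite ltn_pmod // ltn_divLR // mulnC.
by split=> //; rewrite -block_decomp.
Qed.

Lemma cycle_to_block_lt p : p < 3 * m -> cycle_to_block p < 3 * m.
Proof. by case/cycle_decomp=> r [b [r3 bm ->]]; rewrite cycle_to_blockE //; lia. Qed.

Lemma cycle_to_blockK : {in gtn (3 * m), cancel cycle_to_block block_to_cycle}.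
Proof.
move=> p; rewrite inE => /cycle_decomp[r [b [r3 bm ->]]].
by rewrite cycle_to_blockE // block_to_cycleE.
Qed.

Lemma block_to_cycleK : {in gtn (3 * m), cancel block_to_cycle cycle_to_block}.
Proof.
move=> j; rewrite inE => /block_decomp3[b [r [bm r3 ->]]].
by rewrite block_to_cycleE // cycle_to_blockE.
Qed.

Lemma block_to_cycle_lt j : j < 3 * m -> block_to_cycle j < 3 * m.
Proof. by case/block_decomp3=> b [r [bm r3 ->]]; rewrite block_to_cycleE //; nia. Qed.

Definition root_cycle (j : nat) : nat := cycle_to_block ((block_to_cycle j).+1 %% (3 * m)).
Definition root_cycle_inv (j : nat) : nat := iter (3 * m).-1 root_cycle j.

Lemma m3_gt0 : 0 < 3 * m. Proof. by rewrite muln_gt0. Qed.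

Lemma root_cycle_lt : {homo root_cycle : j / j < 3 * m}.
Proof. by move=> j _; rewrite cycle_to_block_lt // ltn_pmod // m3_gt0. Qed.

Lemma iter_root_cycle k j : j < 3 * m ->
  iter k root_cycle j = cycle_to_block ((block_to_cycle j + k) %% (3 * m)).
Proof.
move=> j3m; elim: k => [|k IHk].
  by rewrite addn0 modn_small ?block_to_cycle_lt ?block_to_cycleK.
rewrite iterS IHk /root_cycle cycle_to_blockK ?inE ?ltn_pmod ?m3_gt0 //.
by rewrite -addn1 modnDml addn1 addnS.
Qed.

Lemma iter_root_cycle_period j : j < 3 * m -> iter (3 * m) root_cycle j = j.
Proof.
by move=> j3m; rewrite iter_root_cycle // modnDr modn_small ?block_to_cycle_lt ?block_to_cycleK.
Qed.

Lemma root_cycle_inv_lt : {homo root_cycle_inv : j / j < 3 * m}.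
Proof. by move=> j; rewrite /root_cycle_inv; elim: (3 * m).-1 => //= k IHk /IHk /root_cycle_lt. Qed.

Lemma root_cycleK : {in gtn (3 * m), cancel root_cycle root_cycle_inv}.
Proof.
move=> j; rewrite inE => j3m.
by rewrite /root_cycle_inv -iterSr prednK ?m3_gt0 ?iter_root_cycle_period.
Qed.

Lemma root_cycle_invK : {in gtn (3 * m), cancel root_cycle_inv root_cycle}.
Proof.
move=> j; rewrite inE => j3m.
by rewrite /root_cycle_inv -iterS prednK ?m3_gt0 ?iter_root_cycle_period.
Qed.

Lemma iter_root_cycle_m j : j < 3 * m -> iter m root_cycle j = blockwise 3 rot3 j.
Proof.
case/block_decomp3=> b [r [bm r3 ->]]; rewrite iter_root_cycle ?blockwiseE //; last by nia.
rewrite block_to_cycleE //; case: r r3 => [|[|[|r]]] // _.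
- by rewrite (_ : _ + m = 1 * m + b) ?modn_small ?cycle_to_blockE //; nia.
- by rewrite (_ : _ + m = 2 * m + b) ?modn_small ?cycle_to_blockE //; nia.
- by rewrite (_ : _ + m = 0 * m + b + 3 * m) ?modnDr ?modn_small ?cycle_to_blockE //; nia.
Qed.

End GammaRoots.

Definition gamma_root (m : nat) : nat -> nat := blockwise (3 * m) (root_cycle m).
Definition gamma_root_inv (m : nat) : nat -> nat := blockwise (3 * m) (root_cycle_inv m).

Lemma block_perm_gamma_root m : 0 < m -> block_perm (gamma_root m) (gamma_root_inv m).
Proof.
move=> m_gt0; apply: block_perm_blockwise; rewrite ?m3_gt0 //.
- exact: root_cycle_lt.
- exact: root_cycle_inv_lt.
- exact: root_cycleK.
- exact: root_cycle_invK.
Qed.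

Lemma iter_gamma_root m : 0 < m -> iter m (gamma_root m) =1 gamma.
Proof.
move=> m_gt0 n; rewrite blockwise_iter ?m3_gt0 //; last exact: root_cycle_lt.
rewrite /gamma (blockwise_refine rot3 n (isT : 0 < 3) m_gt0).
by apply: eq_blockwise; rewrite ?m3_gt0 // => j; rewrite inE => /iter_root_cycle_m ->.
Qed.

Definition rho1 : nat -> nat := blockwise 6 (nth 0 [:: 0; 1; 3; 2; 4; 5]).
Definition rho2 : nat -> nat := blockwise 6 (nth 0 [:: 0; 4; 1; 2; 3; 5]).
Definition rho2_inv : nat -> nat := blockwise 6 (nth 0 [:: 0; 2; 3; 4; 1; 5]).

Lemma block_perm_rho1 : block_perm rho1 rho1.
Proof. by apply: block_perm_blockwise => // -[|[|[|[|[|[|j]]]]]]. Qed.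

Lemma block_perm_rho2 : block_perm rho2 rho2_inv.
Proof. by apply: block_perm_blockwise => // -[|[|[|[|[|[|j]]]]]]. Qed.

(* On a block of six points, [gamma] = (0 1 2)(3 4 5) is the commutator of its
   conjugates by the permutations [rho1] = (2 3) and [rho2] = (1 4 3 2). *)
Lemma gamma_commutator n :
  gamma n = rho1 (gamma_inv (rho1 (rho2 (gamma_inv (rho2_inv
              (rho1 (gamma (rho1 (rho2 (gamma (rho2_inv n))))))))))).
Proof.
rewrite /gamma /gamma_inv !(blockwise_refine _ _ (isT : 0 < 3) (isT : 0 < 2)) -[3 * 2]/6.
rewrite /rho1 /rho2 /rho2_inv (block_decomp 6 n).
have : n %% 6 < 6 by rewrite ltn_pmod.
by move: (n %/ 6) (n %% 6) => q [|[|[|[|[|[|j]]]]]] // _; rewrite !blockwiseE.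
Qed.

Definition conj_gamma (p p' : nat -> nat) : aut_carrier :=
  perm_aut (fun n => p (gamma (p' n))) (fun n => p (gamma_inv (p' n))).

Lemma block_perm_conj s s' p p' : block_perm p p' -> block_perm s s' ->
  block_perm (fun n => p (s (p' n))) (fun n => p (s' (p' n))).
Proof.
by move=> pp' ss'; apply: block_perm_comp (block_perm_comp pp' ss') (block_perm_inv pp').
Qed.

Lemma is_aut_conj_gamma p p' : block_perm p p' -> is_aut (conj_gamma p p').
Proof. by move=> pp'; apply: block_perm_aut (block_perm_conj pp' block_perm_gamma). Qed.

Lemma iter_conj (p p' h : nat -> nat) k : cancel p p' -> cancel p' p ->
  iter k (fun n => p (h (p' n))) =1 (fun n => p (iter k h (p' n))).
Proof. by move=> pp' p'p n; elim: k => [|k IHk] /=; rewrite ?p'p // IHk pp'. Qed.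

(** * Failure of residual finiteness and of the Tits alternative *)

Section AutQuotient.
Variable E : aut_carrier -> aut_carrier -> Prop.
Hypothesis cE : aut_congruence E.
Local Notation G := (aut_group E).
Let HG := aut_congruence_group cE.
Let E_aut_eq := congr_aut_eq cE.

Definition block_auts (x : aut_carrier) : Prop :=
  is_aut x /\ exists s s', block_perm s s' /\ E x (perm_aut s s').

Lemma block_auts_perm_aut s s' : block_perm s s' -> block_auts (perm_aut s s').
Proof.
move=> ss'; have aut_s := block_perm_aut ss'.
by split=> //; exists s, s'; split=> //; apply: E_aut_eq.
Qed.

Lemma block_auts_subgroup : @subgroup G block_auts.
Proof.
split; first by move=> x [].
split.
  split; first exact: is_aut_one.
  exists id, id; split; first exact: block_perm_id.
  apply: E_aut_eq; [exact: is_aut_one | exact: block_perm_aut block_perm_id |].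
  by move=> w; rewrite /= rename_id.
split.
  move=> x y [aut_x [s [s' [ss' xs]]]] [aut_y [t [t' [tt' yt]]]].
  split; first exact: is_aut_mul.
  exists (fun n => s (t n)), (fun n => t' (s' n)); split; first exact: block_perm_comp.
  have [aut_s aut_t] := (block_perm_aut ss', block_perm_aut tt').
  apply: (congr_trans cE (q := aut_mul (perm_aut s s') (perm_aut t t'))); try exact: is_aut_mul.
  - exact: block_perm_aut (block_perm_comp ss' tt').
  - exact: congr_mul.
  - by apply: E_aut_eq; [apply: is_aut_mul | apply: block_perm_aut (block_perm_comp ss' tt') |
      apply: perm_aut_mul].
split.
  move=> x [aut_x [s [s' [ss' xs]]]]; split; first exact: is_aut_inv.
  exists s', s; split; first exact: block_perm_inv.
  exact: (congr_inv cE aut_x (block_perm_aut ss') xs).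
move=> x y [aut_x [s [s' [ss' xs]]]] aut_y xy; split=> //; exists s, s'; split=> //.
by apply: (congr_trans cE (q := x)) => //; [apply: block_perm_aut | apply: congr_sym].
Qed.

Lemma block_auts_torsion x : block_auts x -> exists2 n, 0 < n & E (@gpow G x n) aut_one.
Proof.
move=> [aut_x [s [s' [ss' xs]]]]; have [n n_gt0 sn] := block_perm_finite_order ss'.
exists n => //; have aut_s := block_perm_aut ss'.
have aut_xn : is_aut (@gpow G x n) by apply: (gpow_mem HG).
have aut_sn : is_aut (@gpow G (perm_aut s s') n) by apply: (gpow_mem HG).
apply: (geq_trans HG aut_xn aut_sn is_aut_one); first exact: (gpow_congr HG).
apply: E_aut_eq => // w; apply: weq_trans (perm_aut_gpow E s s' n w) _.
by rewrite /= (eq_rename sn) rename_id.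
Qed.

Lemma conj_gamma_root p p' m : block_perm p p' -> 0 < m ->
  exists2 y, block_auts y & E (@gpow G y m) (conj_gamma p p').
Proof.
move=> pp' m_gt0; have root_pp' := block_perm_conj pp' (block_perm_gamma_root m_gt0).
exists (perm_aut (fun n => p (gamma_root m (p' n))) (fun n => p (gamma_root_inv m (p' n)))).
  exact: block_auts_perm_aut.
apply: E_aut_eq; [exact: (gpow_mem HG) (block_perm_aut root_pp') | exact: is_aut_conj_gamma |].
move=> w; apply: weq_trans (perm_aut_gpow E _ _ m w) _.
by case: pp' => pp' p'p _; apply: eq_perm_aut => n; rewrite iter_conj // iter_gamma_root.
Qed.

Lemma conj_gamma_comm p p' : block_perm p p' ->
  E (@comm G (conj_gamma (fun n => p (rho1 n)) (fun n => rho1 (p' n)))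
             (conj_gamma (fun n => p (rho2 n)) (fun n => rho2_inv (p' n))))
    (conj_gamma p p').
Proof.
move=> pp'; have aut1 := is_aut_conj_gamma (block_perm_comp pp' block_perm_rho1).
have aut2 := is_aut_conj_gamma (block_perm_comp pp' block_perm_rho2).
apply: E_aut_eq; last first.
- case: pp' => pp' _ _ w; rewrite /weq /= !rename_comp; congr reduce.
  by apply: eq_rename => n; rewrite !pp' -gamma_commutator.
- exact: is_aut_conj_gamma.
- by rewrite /comm /=; do ?[apply: is_aut_mul | apply: is_aut_inv].
Qed.

Lemma not_virtually_solvable :
  ~ E (perm_aut gamma gamma_inv) aut_one -> ~ @virtually_solvable G block_auts.
Proof.
move=> gamma_ne1 [T0 [sgT0 [_ [fiT0 solT0]]]].
have [e e_gt0 T0e] := finite_index_gpow HG block_auts_subgroup sgT0 fiT0.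
pose C x := exists p p', block_perm p p' /\ x = conj_gamma p p'.
have conj_aut x : C x -> is_aut x by case=> p [p' [pp' ->]]; apply: is_aut_conj_gamma.
apply: (perfect_subset_not_solvable HG (x := conj_gamma id id) _ conj_aut _ _ gamma_ne1 solT0).
- move=> _ [p [p' [pp' ->]]]; have [y By yeE] := conj_gamma_root pp' e_gt0.
  case: sgT0 => _ [_ [_ [_ T0sat]]]; apply: (T0sat (@gpow G y e)) => //; first exact: T0e.
  by apply: conj_aut; exists p, p'.
- move=> _ [p [p' [pp' ->]]].
  exists (conj_gamma (fun n => p (rho1 n)) (fun n => rho1 (p' n))).
  exists (conj_gamma (fun n => p (rho2 n)) (fun n => rho2_inv (p' n))).
  split; last exact: conj_gamma_comm.
    by do 2!eexists; split; first exact: block_perm_comp pp' block_perm_rho1.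
  by do 2!eexists; split; first exact: block_perm_comp pp' block_perm_rho2.
- by exists id, id; split; first exact: block_perm_id.
Qed.

Lemma not_tits_alternative :
  ~ E (perm_aut gamma gamma_inv) aut_one -> ~ tits_alternative G.
Proof.
move=> gamma_ne1 /(_ _ block_auts_subgroup) [vs|free].
  exact: not_virtually_solvable vs.
exact: (torsion_no_free (G := G) block_auts_torsion free).
Qed.

Lemma not_residually_finite :
  ~ E (perm_aut gamma gamma_inv) aut_one -> ~ residually_finite G.
Proof.
move=> gamma_ne1; apply: (divisible_not_residually_finite HG _ gamma_ne1).
  exact: block_perm_aut block_perm_gamma.
move=> m m_gt0; have [y [aut_y _] yg] := conj_gamma_root block_perm_id m_gt0.
by exists y.
Qed.

End AutQuotient.

Theorem mainTheorem6 :
  ~ residually_finite AutFinf /\ ~ residually_finite OutFinf /\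
  ~ tits_alternative AutFinf /\ ~ tits_alternative OutFinf.
Proof.
have gamma_not_inner := perm_aut_not_inner (s' := gamma_inv) gamma_moves_0.
have gamma_ne1 : ~ aut_eq (perm_aut gamma gamma_inv) aut_one.
  by move/(congr_aut_eq aut_congruence_out_eq (block_perm_aut block_perm_gamma) is_aut_one).
split; first exact: not_residually_finite aut_congruence_aut_eq gamma_ne1.
split; first exact: not_residually_finite aut_congruence_out_eq gamma_not_inner.
split; first exact: not_tits_alternative aut_congruence_aut_eq gamma_ne1.
exact: not_tits_alternative aut_congruence_out_eq gamma_not_inner.
Qed.
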